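(* Let $\mathbb{K}$ be a field, $S=\mathbb{K}[x_1,\ldots,x_n]$, and let $I\subseteq S$ be a support-$2$ monomial ideal with underlying simple graph $G(I)$. Suppose there is an edge $\{x_i,x_j\}\in E(G(I))$ such that every minimal vertex cover of $G(I)$ contains exactly one of $x_i,x_j$. If there is some $u\in\mathcal{G}(I)$ with $x_i^{\nu_{i,j}+1}\mid u$ or $x_j^{\nu_{j,i}+1}\mid u$, then $I^{(1)}\neq I$.
   Context: For a monomial ideal $I$, $\mathcal{G}(I)$ denotes its minimal set of monomial generators. $I$ is a support-$2$ monomial ideal if $\mathcal{G}(I)\subseteq\{x_i^ax_j^b : 1\le i<j\le n,\ a,b\ge 1\}$. The underlying simple graph $G(I)$ has vertices $x_1,\ldots,x_n$ and an edge $\{x_i,x_j\}$ whenever some element of $\mathcal{G}(I)$ has support $\{x_i,x_j\}$. For an edge $\{x_i,x_j\}$, $\nu_{i,j}$ denotes the minimum exponent of $x_i$ among the elements of $\mathcal{G}(I)$ whose support is $\{x_i,x_j\}$ (and $\nu_{j,i}$ the minimum exponent of $x_j$ among them). $I^{(1)}=\bigcap_{P\in\mathrm{MinAss}(I)}(IS_P\cap S)$, the intersection of the primary components of $I$ at its minimal primes; $I^{(1)}\neq I$ is equivalent to $I$ having an embedded associated prime. *)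

From mathcomp Require Import all_boot all_order all_algebra.
From mathcomp Require Import mpoly.
Set Implicit Arguments. Unset Strict Implicit. Unset Printing Implicit Defensive.
Import GRing.Theory.
Local Open Scope ring_scope.

Section Defs.
Variables (K : fieldType) (n : nat).

Definition supp_pair (m : 'X_{1..n}) (i j : 'I_n) : bool :=
  [&& i != j, (0 < m i)%N, (0 < m j)%N &
      [forall k : 'I_n, (k != i) && (k != j) ==> (m k == 0%N)]].

Definition support2 (m : 'X_{1..n}) : Prop := exists i j, supp_pair m i j.

Definition minimal_gens (gens : seq 'X_{1..n}) : Prop :=
  uniq gens /\
  forall g h, g \in gens -> h \in gens -> g != h -> ~ (forall k, (g k <= h k)%N).

Definition mon_ideal (gens : seq 'X_{1..n}) : {mpoly K[n]} -> Prop :=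
  fun f => exists c : seq {mpoly K[n]},
    size c = size gens /\ f = \sum_(k < size gens) c`_k * 'X_[nth 0%MM gens k].

Definition is_ideal (P : {mpoly K[n]} -> Prop) : Prop :=
  [/\ P 0, (forall a b, P a -> P b -> P (a + b)) & (forall r a, P a -> P (r * a))].

Definition is_prime_ideal (P : {mpoly K[n]} -> Prop) : Prop :=
  [/\ is_ideal P, ~ P 1 & forall a b, P (a * b) -> P a \/ P b].

Definition minimal_prime (I P : {mpoly K[n]} -> Prop) : Prop :=
  [/\ is_prime_ideal P, (forall f, I f -> P f) &
      forall Q, is_prime_ideal Q -> (forall f, I f -> Q f) ->
        (forall f, Q f -> P f) -> forall f, P f -> Q f].

(* I^(1) = intersection over minimal primes P of I of (I S_P ∩ S);
   I S_P ∩ S = { f | s f ∈ I for some s ∉ P } *)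
Definition symb1 (I : {mpoly K[n]} -> Prop) : {mpoly K[n]} -> Prop :=
  fun f => forall P, minimal_prime I P -> exists s, ~ P s /\ I (s * f).

Definition edge (gens : seq 'X_{1..n}) (i j : 'I_n) : Prop :=
  exists2 g, g \in gens & supp_pair g i j.

Definition vertex_cover (gens : seq 'X_{1..n}) (C : {set 'I_n}) : Prop :=
  forall i j, edge gens i j -> i \in C \/ j \in C.

Definition minimal_vertex_cover (gens : seq 'X_{1..n}) (C : {set 'I_n}) : Prop :=
  vertex_cover gens C /\ forall D : {set 'I_n}, D \proper C -> ~ vertex_cover gens D.

(* nu_{i,j}: minimum exponent of x_i among generators with support {x_i,x_j}
   (meaningful when {x_i,x_j} is an edge, i.e. the list below is nonempty) *)
Definition nu (gens : seq 'X_{1..n}) (i j : 'I_n) : nat :=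
  let s := map (fun g : 'X_{1..n} => g i) (filter (fun g => supp_pair g i j) gens) in foldr minn (head 0%N s) s.

End Defs.

From mathcomp Require Import all_boot all_order all_algebra.
From mathcomp Require Import mpoly.
From mathcomp Require Import boolp.
Set Implicit Arguments. Unset Strict Implicit. Unset Printing Implicit Defensive.
Import GRing.Theory.
Local Open Scope ring_scope.

(* Lowering the exponent of x_i in u to nu_{i,j} gives a monomial w outside I,
   because u is a minimal generator.  Every minimal prime of I is (x_k : k in C)
   for a minimal vertex cover C, which contains exactly one of x_i, x_j.  If
   x_i is not in it, the unit x_i^(u_i - nu_{i,j}) brings w back to u; if x_i
   is, then x_j is a unit there and x_j^b w is divisible by the generator
   x_i^nu_{i,j} x_j^b attaining nu_{i,j}.  Hence w lies in I^(1) but not in I. *)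

Section PrimeIdeals.
Variables (K : fieldType) (n : nat).
Implicit Types (P : {mpoly K[n]} -> Prop) (m : 'X_{1..n}).

Lemma prime_idealX P a k : is_prime_ideal P -> P (a ^+ k) -> P a.
Proof.
case=> _ P1 PM; elim: k => [|k IHk]; first by rewrite expr0.
by rewrite exprS => /PM [|/IHk].
Qed.

Lemma prime_ideal_prod P (T : eqType) (r : seq T) (F : T -> {mpoly K[n]}) :
  is_prime_ideal P -> P (\prod_(k <- r) F k) -> exists2 k, k \in r & P (F k).
Proof.
case=> _ P1 PM; elim: r => [|a r IHr]; first by rewrite big_nil.
rewrite big_cons => /PM [Pa|/IHr [k kr Pk]]; first by exists a => //; rewrite mem_head.
by exists k => //; rewrite in_cons kr orbT.
Qed.

Lemma prime_ideal_monomial P m :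
  is_prime_ideal P -> P 'X_[m] -> exists2 k, (0 < m k)%N & P 'X_k.
Proof.
move=> Pprime; rewrite mpolyXE_id => /(prime_ideal_prod Pprime) [k _ Pk].
exists k => //; last exact: prime_idealX Pk.
by rewrite lt0n; apply: contraPneq Pk => ->; rewrite expr0; case: Pprime.
Qed.

Lemma ideal_sum P (T : Type) (r : seq T) (F : T -> {mpoly K[n]}) :
  is_ideal P -> (forall x, P (F x)) -> P (\sum_(x <- r) F x).
Proof.
case=> P0 PD _ PF; elim: r => [|a r IHr]; first by rewrite big_nil.
by rewrite big_cons; apply: PD.
Qed.

Lemma ideal_monomial P m k : is_ideal P -> (0 < m k)%N -> P 'X_k -> P 'X_[m].
Proof.
case=> _ _ PM mk Pk; have km : (U_(k) <= m)%MM by rewrite lep1mP -lt0n.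
by rewrite -(submK km) mpolyXD; apply: PM.
Qed.

End PrimeIdeals.

Section MonomialIdeals.
Variables (K : fieldType) (n : nat) (gens : seq 'X_{1..n}).
Implicit Types (p : {mpoly K[n]}) (m g : 'X_{1..n}).
Local Notation I := (@mon_ideal K n gens).

Lemma mcoeffMX_nle p g m : ~~ (g <= m)%MM -> (p * 'X_[g])@_m = 0.
Proof.
apply: contraNeq; rewrite mcoeff_eq0 negbK (perm_mem (msuppMX p g)).
by case/mapP=> m' _ ->; rewrite lem_addr.
Qed.

Lemma mon_idealXP m :
  I 'X_[m] <-> exists2 g, g \in gens & (g <= m)%MM.
Proof.
split=> [[c [_ Xm]]|[g gin gm]].
  apply/hasP; apply: contraT => /hasPn gNm.
  have := congr1 (mcoeff m) Xm; rewrite mcoeffX eqxx raddf_sum big1 => [/eqP|k _].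
    by rewrite oner_eq0.
  by apply: mcoeffMX_nle; apply: gNm; apply: mem_nth.
have ig : (index g gens < size gens)%N by rewrite index_mem.
exists (mkseq (fun k => if k == index g gens then 'X_[m - g] else 0) (size gens)).
split; first by rewrite size_mkseq.
rewrite (bigD1 (Ordinal ig)) //= big1 => [|k /eqP kg].
  by rewrite nth_mkseq // eqxx nth_index // -mpolyXD submK ?addr0.
rewrite nth_mkseq //; case: eqP => [kgE|]; last by rewrite mul0r.
by case: kg; apply: val_inj.
Qed.

Lemma proper_divisor_notin_mon_ideal u w :
  minimal_gens gens -> u \in gens -> (w <= u)%MM -> w != u ->
  ~ I 'X_[w].
Proof.
move=> [_ mingens] uin wu wNu /mon_idealXP [g gin gw].
have gu := lepm_trans gw wu.
apply: (mingens g u gin uin); last exact/mnm_lepP.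
apply: contra_neq wNu => gu_eq; apply/mnmP => k; apply/anti_leq.
by rewrite (mnm_lepP wu) -gu_eq (mnm_lepP gw).
Qed.

End MonomialIdeals.

Section VariableIdeals.
Variables (K : fieldType) (n : nat).
Implicit Types (P : {mpoly K[n]} -> Prop) (D : {set 'I_n}) (m : 'X_{1..n}).

Definition var_subst D (k : 'I_n) : {mpoly K[n]} := if k \in D then 0 else 'X_k.

(* The ideal (x_k : k in D), taken as the kernel of the substitution
   x_k := 0 for k in D, so that its primality is immediate. *)
Definition var_ideal D (f : {mpoly K[n]}) : Prop :=
  mmap (@mpolyC n K) (var_subst D) f = 0.

Local Notation subst D := (mmap (@mpolyC n K) (var_subst D)).

Lemma mmap1_var_subst D m :
  mmap1 (var_subst D) m = if [exists k in D, 0 < m k]%N then 0 else 'X_[m].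
Proof.
rewrite /mmap1; case: existsP => [[k /andP [kD mk]]|noD].
  by rewrite (bigD1 k) //= /var_subst kD expr0n eqn0Ngt mk mul0r.
rewrite mpolyXE_id; apply: eq_bigr => k _; rewrite /var_subst.
case: ifP => // kD; suff -> : m k = 0%N by rewrite !expr0.
by apply/eqP; rewrite eqn0Ngt; apply/negP => mk; apply: noD; exists k; rewrite kD.
Qed.

Lemma var_idealX D m : var_ideal D 'X_[m] <-> [exists k in D, 0 < m k]%N.
Proof.
rewrite /var_ideal mmapX mmap1_var_subst; case: ifP => // _.
split=> // /(congr1 (mcoeff m)).
by rewrite mcoeffX eqxx mcoeff0 => /eqP; rewrite oner_eq0.
Qed.

Lemma var_ideal_powX D k d : var_ideal D 'X_[U_(k) *+ d] -> k \in D.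
Proof.
move=> /var_idealX /existsP [l /andP [lD]]; rewrite mulmnE mnm1E.
by case: eqP => [-> _|]; rewrite ?mul0n.
Qed.

Lemma var_ideal_prime D : is_prime_ideal (var_ideal D).
Proof.
rewrite /var_ideal; split; first split.
- exact: mmap0.
- by move=> a b a0 b0; rewrite mmapD a0 b0 addr0.
- by move=> r a a0; rewrite rmorphM /= a0 mulr0.
- by rewrite rmorph1; apply/eqP; rewrite oner_eq0.
- by move=> a b; rewrite rmorphM => /eqP; rewrite mulf_eq0 => /orP [] /eqP; [left|right].
Qed.

Lemma var_ideal_min D P :
  is_ideal P -> (forall k, k \in D -> P 'X_k) -> forall f, var_ideal D f -> P f.
Proof.
move=> Pideal PD f fD; have [P0 _ PM] := Pideal.
have -> : f = f - subst D f by rewrite fD subr0.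
rewrite {1}[f]mpolyE /mmap -sumrB; apply: ideal_sum => // m.
rewrite -mul_mpolyC mmap1_var_subst; case: ifP => [meet|_]; last by rewrite subrr.
have [k /andP [kD mk]] := existsP meet.
by rewrite mulr0 subr0; apply: PM; apply: ideal_monomial Pideal mk (PD k kD).
Qed.

End VariableIdeals.

Section Covers.
Variables (n : nat) (gens : seq 'X_{1..n}).
Implicit Types (g : 'X_{1..n}) (C D : {set 'I_n}).

Lemma supp_pairC g a b : supp_pair g a b = supp_pair g b a.
Proof.
rewrite /supp_pair eq_sym; congr (_ && _); rewrite andbCA; congr (_ && (_ && _)).
by apply: eq_forallb => k; rewrite andbC.
Qed.

Lemma edge_sym a b : edge gens a b -> edge gens b a.
Proof. by case=> g gin gab; exists g; rewrite // supp_pairC. Qed.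

Lemma supp_pair_out g a b k : supp_pair g a b -> k != a -> k != b -> g k = 0%N.
Proof. by case/and4P=> _ _ _ /forallP /(_ k) + ka kb; rewrite ka kb => /eqP. Qed.

Lemma foldr_minn_mem (x : nat) s : foldr minn x s \in x :: s.
Proof.
elim: s => [|a s IHs] /=; first exact: mem_head.
rewrite /minn; case: ltnP => _; first by rewrite !inE eqxx orbT.
by move: IHs; rewrite !inE => /orP [->|->]; rewrite ?orbT.
Qed.

Lemma nu_attained i j : edge gens i j ->
  exists2 g, g \in gens & supp_pair g i j /\ g i = nu gens i j.
Proof.
case=> g gin gij; pose s := [seq g i | g <- gens & supp_pair g i j].
have : nu gens i j \in s.
  have : g i \in s by apply: map_f; rewrite mem_filter gij.
  rewrite /nu -/s; case: s => [//|a s] _ /=.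
  have /= := foldr_minn_mem a (a :: s).
  by rewrite in_cons => /orP [/eqP ->|]; rewrite ?mem_head.
by case/mapP=> g0; rewrite mem_filter => /andP [g0ij g0in] nuE; exists g0.
Qed.

Lemma exists_minimal_vertex_cover C :
  vertex_cover gens C ->
  exists2 D : {set 'I_n}, D \subset C & minimal_vertex_cover gens D.
Proof.
have [N] := ubnP #|C|; elim: N C => // N IHN C /ltnSE CN Ccover.
have [[D DC Dcover]|noD] :=
  pselect (exists2 D : {set 'I_n}, D \proper C & vertex_cover gens D).
  have [E ED minE] := IHN D (leq_trans (proper_card DC) CN) Dcover.
  by exists E => //; apply: subset_trans ED (proper_sub DC).
by exists C => //; split=> // D DC Dcover; apply: noD; exists D.
Qed.

End Covers.

Section MinimalPrimes.
Variables (K : fieldType) (n : nat) (gens : seq 'X_{1..n}).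
Hypothesis gens_support2 : forall g, g \in gens -> support2 g.
Implicit Types (P : {mpoly K[n]} -> Prop) (D : {set 'I_n}).
Local Notation I := (@mon_ideal K n gens).

Lemma vertex_cover_var_ideal D :
  vertex_cover gens D -> forall f, I f -> var_ideal D f.
Proof.
move=> Dcover f [c [_ ->]]; have [Videal _ _] := var_ideal_prime K D.
apply: (ideal_sum _ Videal) => k; have [_ _ VM] := Videal; apply: VM.
apply/var_idealX; set g := nth 0%MM gens k.
have gin : g \in gens by apply: mem_nth.
have [a [b gab]] := gens_support2 gin; have /and4P [_ ga gb _] := gab.
have /(Dcover a b) [aD|bD] : edge gens a b by exists g.
- by apply/existsP; exists a; rewrite aD.
- by apply/existsP; exists b; rewrite bD.
Qed.

Lemma prime_vars_vertex_cover P :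
  is_prime_ideal P -> (forall f, I f -> P f) ->
  vertex_cover gens [set k | `[< P 'X_k >]].
Proof.
move=> Pprime IP a b [g gin gab].
have : I 'X_[g] by apply/mon_idealXP; exists g => //; apply: lepm_refl.
move=> /IP /(prime_ideal_monomial Pprime) [k gk Pk]; rewrite !inE.
have [<-|ka] := eqVneq k a; first by left; apply/asboolP.
have [<-|kb] := eqVneq k b; first by right; apply/asboolP.
by move: gk; rewrite (supp_pair_out gab ka kb).
Qed.

Lemma minimal_prime_var_ideal P : minimal_prime I P ->
  exists2 D, minimal_vertex_cover gens D & forall f, P f <-> var_ideal D f.
Proof.
case=> Pprime IP Pmin.
have [D DC minD] := exists_minimal_vertex_cover (prime_vars_vertex_cover Pprime IP).
have DP : forall f, var_ideal D f -> P f.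
  apply: var_ideal_min => [|k /(subsetP DC)]; first by case: Pprime.
  by rewrite inE => /asboolP.
exists D => // f; split=> [|/DP //].
exact: Pmin (var_ideal_prime K D) (vertex_cover_var_ideal minD.1) DP f.
Qed.

End MinimalPrimes.

Lemma symb1_neq_mon_ideal_of_large_exponent (K : fieldType) (n : nat)
    (gens : seq 'X_{1..n}) (i j : 'I_n) u :
  minimal_gens gens -> (forall g, g \in gens -> support2 g) -> edge gens i j ->
  (forall C : {set 'I_n}, minimal_vertex_cover gens C -> (i \in C) (+) (j \in C)) ->
  u \in gens -> (nu gens i j < u i)%N ->
  symb1 (@mon_ideal K n gens) <> @mon_ideal K n gens.
Proof.
move=> mingens gens_support2 Eij covers_ij uin nu_lt_u.
have [g0 g0in [g0ij g0i]] := nu_attained Eij.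
set v := nu gens i j in nu_lt_u g0i.
pose w := [multinom if k == i then v else u k | k < n].
have wE k : w k = if k == i then v else u k by rewrite mnmE.
have uE : u = (U_(i) *+ (u i - v) + w)%MM.
  apply/mnmP => k; rewrite mnmDE mulmnE mnm1E wE eq_sym.
  by case: eqP => [->|_]; rewrite ?mul1n ?subnK 1?ltnW.
have w_notin : ~ @mon_ideal K n gens 'X_[w].
  apply: (proper_divisor_notin_mon_ideal mingens uin); first by rewrite uE lem_addl.
  by apply: contraTneq nu_lt_u => wu; rewrite -wu wE eqxx ltnn.
move=> symbI; apply: w_notin; rewrite -symbI => P.
case/(minimal_prime_var_ideal gens_support2) => D minD PD.
have unit_pow k d : k \notin D -> ~ P 'X_[U_(k) *+ d].
  by move=> /negP kD /PD /var_ideal_powX.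
have := covers_ij D minD; case: (boolP (i \in D)) => [_ /= jD|iD _].
- exists 'X_[U_(j) *+ g0 j]; split; first exact: unit_pow.
  rewrite -mpolyXD; apply/mon_idealXP; exists g0 => //; apply/mnm_lepP => k.
  rewrite mnmDE mulmnE mnm1E wE.
  have [->|ki] := eqVneq k i; first by rewrite g0i leq_addl.
  have [->|kj] := eqVneq k j; first by rewrite mul1n leq_addr.
  by rewrite (supp_pair_out g0ij ki kj).
- exists 'X_[U_(i) *+ (u i - v)]; split; first exact: unit_pow.
  by rewrite -mpolyXD -uE; apply/mon_idealXP; exists u => //; apply: lepm_refl.
Qed.

Theorem proposition3p1 (K : fieldType) (n : nat) (gens : seq 'X_{1..n}) :
  minimal_gens gens ->
  (forall g, g \in gens -> support2 g) ->
  forall i j : 'I_n,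
    edge gens i j ->
    (forall C : {set 'I_n}, minimal_vertex_cover gens C ->
        (i \in C) (+) (j \in C)) ->
    (exists2 u, u \in gens & ((nu gens i j).+1 <= u i)%N \/ ((nu gens j i).+1 <= u j)%N) ->
    symb1 (@mon_ideal K n gens) <> @mon_ideal K n gens.
Proof.
move=> mingens gens_support2 i j Eij covers_ij [u uin [nu_lt_ui|nu_lt_uj]].
  exact: (symb1_neq_mon_ideal_of_large_exponent
            mingens gens_support2 Eij covers_ij uin nu_lt_ui).
apply: (symb1_neq_mon_ideal_of_large_exponent
          mingens gens_support2 (edge_sym Eij) _ uin nu_lt_uj).
by move=> C /covers_ij; rewrite addbC.
Qed.
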